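(* Let $R$ be an involutive $K$-algebra and $t$ a canonical, $K$-linear, $R$-valued trace on $L_K(E)$. (1) Let $p,q$ be paths with $\mathbf{r}(p)=\mathbf{r}(q)$, let $r_1,\dots,r_m$ be paths with $\mathbf{s}(r_i)=\mathbf{r}(p)$, and let $a_1,\dots,a_m\in K$. Put $x=\sum_{i=1}^m a_i\,pr_ir_i^*q^*$ and $y=\sum_{i=1}^m a_i\,r_ir_i^*$. Then $t(xx^* )=t(yy^* )$. (2) Suppose further that $t$ satisfies condition (P). Let $v$ be a vertex, let $e_1,\dots,e_m$ be distinct edges in $\mathbf{s}^{-1}(v)$, for each $i$ let $r_{i1},\dots,r_{im_i}$ be paths with $\mathbf{s}(r_{ij})=\mathbf{r}(e_i)$, and let $a,a_{ij}\in K$. Put $x=\sum_{i=1}^m\sum_{j=1}^{m_i}a_{ij}\,e_ir_{ij}r_{ij}^*e_i^*+av$ and $y=\sum_{i=1}^m\sum_{j=1}^{m_i}a_{ij}\,e_ir_{ij}r_{ij}^*e_i^*+a\sum_{i=1}^me_ie_i^*$. Then $t(xx^* )\ge t(yy^* )$ in $R$.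
   Context: A (directed) graph $E=(E^0,E^1,\mathbf{s},\mathbf{r})$ has vertex set $E^0$, edge set $E^1$, source and range maps; no finiteness or countability is assumed. A path is a vertex $v$ (length $0$) or a sequence $p=e_1\cdots e_n$ of edges with $\mathbf{r}(e_i)=\mathbf{s}(e_{i+1})$, $\mathbf{s}(p)=\mathbf{s}(e_1)$, $\mathbf{r}(p)=\mathbf{r}(e_n)$. A vertex $v$ is regular if $\mathbf{s}^{-1}(v)$ is nonempty and finite. $K$ is a field with an arbitrary involution $a\mapsto a^*$. $L_K(E)$ is the free $K$-algebra generated by $E^0\cup E^1\cup\{e^*:e\in E^1\}$ subject to (V) $vw=\delta_{v,w}v$; (E1) $\mathbf{s}(e)e=e\mathbf{r}(e)=e$; (E2) $\mathbf{r}(e)e^*=e^*\mathbf{s}(e)=e^*$; (CK1) $e^*f=\delta_{e,f}\mathbf{r}(e)$; (CK2) $v=\sum_{e\in\mathbf{s}^{-1}(v)}ee^*$ for regular $v$; $p^*=e_n^*\cdots e_1^*$, $v^*=v$, and $L_K(E)$ is involutive via $(\sum a_ip_iq_i^* )^*=\sum a_i^*q_ip_i^*$. An involutive $K$-algebra is a $K$-algebra with an involution ($(xy)^*=y^*x^*$, $x^{**}=x$, additive) satisfying $(ax)^*=a^*x^*$; in it $x\ge0$ means $x$ is a finite sum of elements $zz^*$, and $x\ge y$ means $x-y\ge0$. A trace is an additive map with $t(xy)=t(yx)$; $K$-linear means $t(ax)=at(x)$. A trace on $L_K(E)$ is canonical if $t(pq^* )=\delta_{p,q}t(\mathbf{r}(p))$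 for all paths $p,q$ with $\mathbf{r}(p)=\mathbf{r}(q)$. Condition (P): $t\big(v-\sum_{e\in I}\mathbf{r}(e)\big)\ge0$ for every vertex $v$ and every finite subset $I\subseteq\mathbf{s}^{-1}(v)$ (for $I=\emptyset$ this reads $t(v)\ge0$). *)

From HB Require Import structures.
From mathcomp Require Import all_boot all_order all_algebra.
From Stdlib Require List.

Set Implicit Arguments.
Unset Strict Implicit.
Unset Printing Implicit Defensive.
Import GRing.Theory.
Local Open Scope ring_scope.

Record fld_invol (K : fieldType) := FInv {
  fconj : K -> K;
  fconjD : forall a b, fconj (a + b) = fconj a + fconj b;
  fconjM : forall a b, fconj (a * b) = fconj a * fconj b;
  fconjK : forall a, fconj (fconj a) = a }.

Record nalg (K : fieldType) := NAlg {
  ncar :> lmodType K;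
  nmul : ncar -> ncar -> ncar;
  nmulA : forall x y z, nmul x (nmul y z) = nmul (nmul x y) z;
  nmulDl : forall x y z, nmul (x + y) z = nmul x z + nmul y z;
  nmulDr : forall x y z, nmul x (y + z) = nmul x y + nmul x z;
  nmulZl : forall a x y, nmul (a *: x) y = a *: nmul x y;
  nmulZr : forall a x y, nmul x (a *: y) = a *: nmul x y }.

Notation "x ⋅ y" := (@nmul _ _ x y) (at level 40, left associativity).

Record ninv (K : fieldType) (c : fld_invol K) (A : nalg K) := NInv {
  nstar : A -> A;
  nstarD : forall x y, nstar (x + y) = nstar x + nstar y;
  nstarM : forall x y, nstar (x ⋅ y) = nstar y ⋅ nstar x;
  nstarK : forall x, nstar (nstar x) = x;
  nstarZ : forall a x, nstar (a *: x) = fconj c a *: nstar x }.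

(* x >= 0 : x is a finite sum of elements z z^star *)
Definition npos (K : fieldType) (c : fld_invol K) (R : nalg K) (s : ninv c R) (x : R) : Prop :=
  exists l : seq R, x = \sum_(z <- l) (z ⋅ nstar s z).

Record graph := Graph {
  vert : Type;
  edge : Type;
  src : edge -> vert;
  rng : edge -> vert }.

Section Paths.
Variable G : graph.

(* A path is a pair (v, l): v = s(p); l = edges e1 ... en (l = nil : path of length 0 = vertex v). *)
Fixpoint is_path (v : vert G) (l : list (edge G)) : Prop :=
  match l with
  | nil => True
  | e :: l' => src e = v /\ is_path (rng e) l'
  end.

Fixpoint path_rng (v : vert G) (l : list (edge G)) : vert G :=
  match l with
  | nil => v
  | e :: l' => path_rng (rng e) l'
  end.

Variables (K : fieldType) (A : nalg K).
Variables (P : vert G -> A) (X Y : edge G -> A).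

Fixpoint prodX (e : edge G) (l : list (edge G)) : A :=
  match l with
  | nil => X e
  | f :: l' => X e ⋅ prodX f l'
  end.

Fixpoint prodY (e : edge G) (l : list (edge G)) : A :=
  match l with
  | nil => Y e
  | f :: l' => prodY f l' ⋅ Y e
  end.

Definition pathA (v : vert G) (l : list (edge G)) : A :=
  match l with nil => P v | e :: l' => prodX e l' end.

Definition pathG (v : vert G) (l : list (edge G)) : A :=
  match l with nil => P v | e :: l' => prodY e l' end.

(* Relations (V), (E1), (E2), (CK1), (CK2). Finite sets s^{-1}(v) are given by
   duplicate-free enumerations. *)
Definition lpa_rels : Prop :=
  (forall v, P v ⋅ P v = P v) /\
  (forall v w, v <> w -> P v ⋅ P w = 0) /\
  (forall e, P (src e) ⋅ X e = X e /\ X e ⋅ P (rng e) = X e) /\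
  (forall e, P (rng e) ⋅ Y e = Y e /\ Y e ⋅ P (src e) = Y e) /\
  (forall e, Y e ⋅ X e = P (rng e)) /\
  (forall e f, e <> f -> Y e ⋅ X f = 0) /\
  (forall v (l : list (edge G)), l <> nil -> List.NoDup l ->
     (forall e, List.In e l <-> src e = v) ->
     P v = \sum_(e <- l) (X e ⋅ Y e)).

End Paths.

Definition nalg_hom (K : fieldType) (A B : nalg K) (phi : A -> B) : Prop :=
  (forall x y, phi (x + y) = phi x + phi y) /\
  (forall a x, phi (a *: x) = a *: phi x) /\
  (forall x y, phi (x ⋅ y) = phi x ⋅ phi y).

Definition is_LPA (G : graph) (K : fieldType) (c : fld_invol K) (A : nalg K) (s : ninv c A)
    (P : vert G -> A) (X Y : edge G -> A) : Prop :=
  lpa_rels P X Y /\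
  (forall (B : nalg K) (P' : vert G -> B) (X' Y' : edge G -> B), lpa_rels P' X' Y' ->
     (exists phi : A -> B, nalg_hom phi /\ (forall v, phi (P v) = P' v) /\
        (forall e, phi (X e) = X' e) /\ (forall e, phi (Y e) = Y' e)) /\
     (forall phi1 phi2 : A -> B,
        nalg_hom phi1 -> (forall v, phi1 (P v) = P' v) -> (forall e, phi1 (X e) = X' e) ->
        (forall e, phi1 (Y e) = Y' e) ->
        nalg_hom phi2 -> (forall v, phi2 (P v) = P' v) -> (forall e, phi2 (X e) = X' e) ->
        (forall e, phi2 (Y e) = Y' e) ->
        forall x, phi1 x = phi2 x)) /\
  (forall v, nstar s (P v) = P v) /\
  (forall e, nstar s (X e) = Y e) /\
  (forall e, nstar s (Y e) = X e).

Definition is_trace (K : fieldType) (A R : nalg K) (t : A -> R) : Prop :=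
  (forall x y, t (x + y) = t x + t y) /\ (forall x y, t (x ⋅ y) = t (y ⋅ x)).

Definition klinear (K : fieldType) (A R : nalg K) (t : A -> R) : Prop :=
  forall (a : K) x, t (a *: x) = a *: t x.

Definition canonical (G : graph) (K : fieldType) (A R : nalg K)
    (P : vert G -> A) (X Y : edge G -> A) (t : A -> R) : Prop :=
  forall v1 l1 v2 l2, is_path v1 l1 -> is_path v2 l2 -> path_rng v1 l1 = path_rng v2 l2 ->
    ((v1, l1) = (v2, l2) -> t (pathA P X v1 l1 ⋅ pathG P Y v2 l2) = t (P (path_rng v1 l1))) /\
    ((v1, l1) <> (v2, l2) -> t (pathA P X v1 l1 ⋅ pathG P Y v2 l2) = 0).

Definition condP (G : graph) (K : fieldType) (c : fld_invol K) (A R : nalg K) (sR : ninv c R)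
    (P : vert G -> A) (t : A -> R) : Prop :=
  forall (v : vert G) (I : list (edge G)), List.NoDup I -> (forall e, List.In e I -> src e = v) ->
    npos sR (t (P v - \sum_(e <- I) P (rng e))).

From HB Require Import structures.
From mathcomp Require Import all_boot all_order all_algebra.
From Stdlib Require List.
Set Implicit Arguments.
Unset Strict Implicit.
Unset Printing Implicit Defensive.
Import GRing.Theory.
Local Open Scope ring_scope.

(* (1) Writing x = p y q^*, the relations p^* p = q^* q = u for the common range vertex u and
   u y = y = y u give x x^* = p y y^* p^*, and the trace property moves p^* back onto p.
   (2) With f = sum_i e_i e_i^* and the Cuntz-Krieger defect d = v - f, one has x = y + a d,
   d is a self-adjoint idempotent and y d = 0, so x x^* = y y^* + a a^* d; finally
   t(d) = t(v - sum_i r(e_i)) is positive by (P). *)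

Section Additive.
Variables (U V : zmodType) (f : U -> V).
Hypothesis fD : forall x y, f (x + y) = f x + f y.

Lemma additive0 : f 0 = 0.
Proof. by apply/(addrI (f 0)); rewrite -fD !addr0. Qed.

Lemma additiveB x y : f (x - y) = f x - f y.
Proof.
have fN z : f (- z) = - f z by apply/(addrI (f z)); rewrite -fD !subrr additive0.
by rewrite fD fN.
Qed.

Lemma additive_sum (I : Type) (r : seq I) (F : I -> U) :
  f (\sum_(i <- r) F i) = \sum_(i <- r) f (F i).
Proof. exact: (big_morph f fD additive0). Qed.

End Additive.

Section NalgTheory.
Variables (K : fieldType) (A : nalg K).
Implicit Types (x y z : A).

Lemma nmul0l x : 0 ⋅ x = 0.
Proof. exact: (additive0 (fun y z => nmulDl y z x)). Qed.

Lemma nmul0r x : x ⋅ 0 = 0.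
Proof. exact: (additive0 (nmulDr x)). Qed.

Lemma nmulBl x y z : (y - z) ⋅ x = y ⋅ x - z ⋅ x.
Proof. exact: (additiveB (fun y z => nmulDl y z x)). Qed.

Lemma nmulBr x y z : x ⋅ (y - z) = x ⋅ y - x ⋅ z.
Proof. exact: (additiveB (nmulDr x)). Qed.

Lemma nmul_suml x (I : Type) (r : seq I) (F : I -> A) :
  (\sum_(i <- r) F i) ⋅ x = \sum_(i <- r) (F i ⋅ x).
Proof. exact: (additive_sum (fun y z => nmulDl y z x)). Qed.

Lemma nmul_sumr x (I : Type) (r : seq I) (F : I -> A) :
  x ⋅ (\sum_(i <- r) F i) = \sum_(i <- r) (x ⋅ F i).
Proof. exact: (additive_sum (nmulDr x)). Qed.

Lemma sum_nmul_eq0 x (I : Type) (r : seq I) (F : I -> A) :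
  (forall i, F i ⋅ x = 0) -> (\sum_(i <- r) F i) ⋅ x = 0.
Proof. by move=> Fx0; rewrite nmul_suml big1. Qed.

End NalgTheory.

Section StarAlgebra.
Variables (K : fieldType) (c : fld_invol K).

Lemma npos_scale (R : nalg K) (s : ninv c R) (a : K) (x : R) :
  npos s x -> npos s ((a * fconj c a) *: x).
Proof.
case=> l ->; exists (map (fun z => a *: z) l).
rewrite big_map scaler_sumr; apply: eq_bigr => z _.
by rewrite nstarZ nmulZl nmulZr scalerA.
Qed.

Variables (A : nalg K) (s : ninv c A).
Local Notation "x ^†" := (nstar s x) (at level 2, format "x ^†").

Lemma nstar0 : 0^† = 0.
Proof. exact: (additive0 (nstarD s)). Qed.

Lemma nstar_runit (u y : A) : u^† = u -> u ⋅ y = y -> y^† ⋅ u = y^†.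
Proof. by move=> su uy; rewrite -{1}su -nstarM uy. Qed.

Lemma trace_sandwich (R : nalg K) (t : A -> R) (p q u y : A) :
  is_trace t -> u^† = u -> p^† ⋅ p = u -> q^† ⋅ q = u -> u ⋅ y = y -> y ⋅ u = y ->
  t ((p ⋅ y ⋅ q^†) ⋅ (p ⋅ y ⋅ q^†)^†) = t (y ⋅ y^†).
Proof.
move=> [_ tC] su pp qq uy yu.
rewrite !nstarM nstarK -!nmulA (nmulA (q^†)) qq (nmulA y) yu.
by rewrite tC -!nmulA pp nstar_runit.
Qed.

Lemma mul_nstar_add_projection (y d : A) (a : K) :
  d^† = d -> d ⋅ d = d -> y ⋅ d = 0 ->
  (y + a *: d) ⋅ (y + a *: d)^† = y ⋅ y^† + (a * fconj c a) *: d.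
Proof.
move=> sd dd yd.
have dy : d ⋅ y^† = 0 by rewrite -{1}sd -nstarM yd nstar0.
rewrite nstarD nstarZ sd nmulDl !nmulDr !nmulZl !nmulZr yd dy dd.
by rewrite !scaler0 add0r addr0 scalerA.
Qed.

End StarAlgebra.

Lemma In_mem (T : eqType) (x : T) (s : seq T) : List.In x s -> x \in s.
Proof.
by elim: s => [|y s IH] //= [->|/IH xs]; rewrite in_cons ?eqxx ?xs ?orbT.
Qed.

Lemma uniq_NoDup (T : eqType) (s : seq T) : uniq s -> List.NoDup s.
Proof.
elim: s => [|x s IH] /=; first by constructor.
by case/andP=> xs /IH; constructor=> // /In_mem; apply/negP.
Qed.

Section LeavittPaths.
Variables (G : graph) (K : fieldType) (c : fld_invol K) (A : nalg K) (s : ninv c A).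
Variables (P : vert G -> A) (X Y : edge G -> A).
Hypothesis rels : lpa_rels P X Y.
Hypothesis nstarP : forall v, nstar s (P v) = P v.
Hypothesis nstarX : forall e, nstar s (X e) = Y e.
Local Notation "x ^†" := (nstar s x) (at level 2, format "x ^†").
Local Notation pA := (pathA P X).
Local Notation pG := (pathG P Y).

Lemma nstarY e : (Y e)^† = X e.
Proof. by rewrite -nstarX nstarK. Qed.

Lemma src_prodX e l : P (src e) ⋅ prodX X e l = prodX X e l.
Proof.
have [_ [_ [XP _]]] := rels.
by case: l => [|f l] /=; rewrite ?nmulA (XP e).1.
Qed.

Lemma src_pathA v l : is_path v l -> P v ⋅ pA v l = pA v l.
Proof.
have [PP _] := rels.
by case: l => [|e l] /=; [rewrite PP | case=> <- _; exact: src_prodX].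
Qed.

Lemma nstar_pathA v l : (pA v l)^† = pG v l.
Proof.
case: l => [|e l] //=; elim: l e => [|f l IH] e //=.
by rewrite nstarM IH nstarX.
Qed.

Lemma prodY_prodX e l : is_path (rng e) l -> prodY Y e l ⋅ prodX X e l = P (path_rng (rng e) l).
Proof.
have [_ [_ [_ [_ [YX _]]]]] := rels.
elim: l e => [|f l IH] e /=; first by rewrite YX.
by case=> fe pf; rewrite -nmulA (nmulA (Y e)) YX -fe src_prodX IH.
Qed.

Lemma pathG_pathA v l : is_path v l -> pG v l ⋅ pA v l = P (path_rng v l).
Proof.
have [PP _] := rels.
by case: l => [|e l] /=; [rewrite PP | case=> _; exact: prodY_prodX].
Qed.

Lemma trace_path_sandwich (R : nalg K) (t : A -> R) vp lp vq lq (I : Type) (r : seq I)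
    (a : I -> K) (rv : I -> vert G) (rl : I -> list (edge G)) :
  is_trace t -> is_path vp lp -> is_path vq lq -> path_rng vp lp = path_rng vq lq ->
  (forall i, is_path (rv i) (rl i) /\ rv i = path_rng vp lp) ->
  let y := \sum_(i <- r) a i *: (pA (rv i) (rl i) ⋅ pG (rv i) (rl i)) in
  let x := \sum_(i <- r) a i *: (pA vp lp ⋅ pA (rv i) (rl i) ⋅ pG (rv i) (rl i) ⋅ pG vq lq) in
  t (x ⋅ x^†) = t (y ⋅ y^†).
Proof.
move=> tr pp pq pqE pr y x; set u := P (path_rng vp lp).
have ur i : u ⋅ pA (rv i) (rl i) = pA (rv i) (rl i).
  by have [pri ri] := pr i; rewrite /u -ri src_pathA.
have xE : x = pA vp lp ⋅ y ⋅ (pA vq lq)^†.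
  rewrite nstar_pathA nmul_sumr nmul_suml; apply: eq_bigr => i _.
  by rewrite nmulZr nmulZl nmulA.
have uy : u ⋅ y = y.
  by rewrite nmul_sumr; apply: eq_bigr => i _; rewrite nmulZr nmulA ur.
have yu : y ⋅ u = y.
  rewrite nmul_suml; apply: eq_bigr => i _.
  by rewrite nmulZl -nmulA -nstar_pathA (nstar_runit (nstarP _) (ur i)).
rewrite xE; apply: (trace_sandwich (u := u)) => //; first exact: nstarP.
  by rewrite nstar_pathA pathG_pathA.
by rewrite nstar_pathA pathG_pathA // -pqE.
Qed.

Variables (v : vert G) (m : nat) (e : 'I_m -> edge G).
Hypothesis e_inj : injective e.
Hypothesis src_e : forall i, src (e i) = v.

Definition edge_proj : A := \sum_(i < m) X (e i) ⋅ Y (e i).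

Definition ck_defect : A := P v - edge_proj.

Lemma Y_edge_proj i : Y (e i) ⋅ edge_proj = Y (e i).
Proof.
have [_ [_ [_ [YP [YX [YXo _]]]]]] := rels.
rewrite nmul_sumr (bigD1 i) //= big1 ?addr0; first by rewrite nmulA YX (YP _).1.
move=> j ji; rewrite nmulA YXo ?nmul0l // => /e_inj ij.
by rewrite ij eqxx in ji.
Qed.

Lemma Y_ck_defect i : Y (e i) ⋅ ck_defect = 0.
Proof.
have [_ [_ [_ [YP _]]]] := rels.
by rewrite nmulBr Y_edge_proj -(src_e i) (YP _).2 subrr.
Qed.

Lemma mulY_ck_defect i (w : A) : w ⋅ Y (e i) ⋅ ck_defect = 0.
Proof. by rewrite -nmulA Y_ck_defect nmul0r. Qed.

Lemma edge_proj_ck_defect : edge_proj ⋅ ck_defect = 0.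
Proof. by apply: sum_nmul_eq0 => i; exact: mulY_ck_defect. Qed.

Lemma ck_defect_idem : ck_defect ⋅ ck_defect = ck_defect.
Proof.
have [PP [_ [XP _]]] := rels.
have vf : P v ⋅ edge_proj = edge_proj.
  rewrite nmul_sumr; apply: eq_bigr => i _.
  by rewrite nmulA -(src_e i) (XP _).1.
by rewrite {1}/ck_defect nmulBl edge_proj_ck_defect subr0 nmulBr PP vf.
Qed.

Lemma nstar_ck_defect : ck_defect^† = ck_defect.
Proof.
rewrite (additiveB (nstarD s)) nstarP (additive_sum (nstarD s)).
by congr (_ - _); apply: eq_bigr => i _; rewrite nstarM nstarX nstarY.
Qed.

Lemma trace_ck_defect (R : nalg K) (t : A -> R) : is_trace t ->
  t ck_defect = t (P v - \sum_(f <- map e (index_enum 'I_m)) P (rng f)).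
Proof.
have [_ [_ [_ [_ [YX _]]]]] := rels.
move=> [tD tC]; rewrite !(additiveB tD) big_map !(additive_sum tD).
by congr (_ - _); apply: eq_bigr => i _; rewrite tC YX.
Qed.

Lemma condP_ck_defect (R : nalg K) (sR : ninv c R) (t : A -> R) :
  is_trace t -> condP sR P t -> npos sR (t ck_defect).
Proof.
move=> tr tP; rewrite trace_ck_defect //; apply: tP.
  apply: List.NoDup_map_NoDup_ForallPairs; first by move=> i j _ _; exact: e_inj.
  exact/uniq_NoDup/index_enum_uniq.
by move=> f /List.in_map_iff [i [<- _]].
Qed.

End LeavittPaths.

Theorem lemma3p3 (G : graph) (K : fieldType) (c : fld_invol K)
    (A : nalg K) (sA : ninv c A) (P : vert G -> A) (X Y : edge G -> A)
    (HL : is_LPA sA P X Y)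
    (R : nalg K) (sR : ninv c R) (t : A -> R)
    (Ht : is_trace t) (Hlin : klinear t) (Hcan : canonical P X Y t) :
  (* (1) *)
  (forall (vp : vert G) (lp : list (edge G)) (vq : vert G) (lq : list (edge G))
          (m : nat) (rv : 'I_m -> vert G) (rl : 'I_m -> list (edge G)) (a : 'I_m -> K),
     is_path vp lp -> is_path vq lq -> path_rng vp lp = path_rng vq lq ->
     (forall i, is_path (rv i) (rl i) /\ rv i = path_rng vp lp) ->
     let x := \sum_(i < m) a i *: (pathA P X vp lp ⋅ pathA P X (rv i) (rl i)
                                   ⋅ pathG P Y (rv i) (rl i) ⋅ pathG P Y vq lq) in
     let y := \sum_(i < m) a i *: (pathA P X (rv i) (rl i) ⋅ pathG P Y (rv i) (rl i)) in
     t (x ⋅ nstar sA x) = t (y ⋅ nstar sA y)) /\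
  (* (2) *)
  (condP sR P t ->
   forall (v : vert G) (m : nat) (e : 'I_m -> edge G) (mi : 'I_m -> nat)
          (rv : forall i : 'I_m, 'I_(mi i) -> vert G)
          (rl : forall i : 'I_m, 'I_(mi i) -> list (edge G))
          (a : K) (aij : forall i : 'I_m, 'I_(mi i) -> K),
     injective e -> (forall i, src (e i) = v) ->
     (forall i j, is_path (rv i j) (rl i j) /\ rv i j = rng (e i)) ->
     let S := \sum_(i < m) \sum_(j < mi i)
                aij i j *: (X (e i) ⋅ pathA P X (rv i j) (rl i j)
                            ⋅ pathG P Y (rv i j) (rl i j) ⋅ Y (e i)) in
     let x := S + a *: P v in
     let y := S + a *: \sum_(i < m) (X (e i) ⋅ Y (e i)) in
     npos sR (t (x ⋅ nstar sA x) - t (y ⋅ nstar sA y))).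
Proof.
have [rels [_ [nstarP [nstarX _]]]] := HL.
split=> [vp lp vq lq m rv rl a pp pq pqE pr x y|tP v m e mi rv rl a aij e_inj src_e _ S x y].
  exact: trace_path_sandwich.
set d := ck_defect P X Y v e.
have Sd : S ⋅ d = 0.
  apply: sum_nmul_eq0 => i; apply: sum_nmul_eq0 => j.
  by rewrite nmulZl (mulY_ck_defect rels) // scaler0.
have xE : x = y + a *: d.
  by rewrite /x /y /d /ck_defect -/(edge_proj X Y e) scalerBr addrA addrAC addrK.
have yd : y ⋅ d = 0.
  by rewrite nmulDl Sd nmulZl edge_proj_ck_defect // scaler0 add0r.
rewrite xE mul_nstar_add_projection //; last 2 first.
- exact: nstar_ck_defect.
- exact: (ck_defect_idem rels e_inj src_e).
rewrite Ht.1 addrC addKr Hlin; apply: npos_scale.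
exact: (condP_ck_defect rels e_inj src_e Ht tP).
Qed.
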